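(* If $\mathcal C$ is an infinitary clone $\tau$-algebra that has no proper subalgebra, then $(\mathcal C^\downarrow)^\uparrow\cong\mathcal C$.
   Context: $\tau$ is a set of $\omega$-ary operation symbols disjoint from $\{q\}\cup\{e_i:i\in\omega\}$. An infinitary clone $\tau$-algebra is an algebra $\mathcal C$ with constants $e_i^{\mathcal C}$ ($i\in\omega$), a constant $f^{\mathcal C}$ for each $f\in\tau$, and an $\omega$-ary operation $q^{\mathcal C}$, satisfying (N1) $q(e_i,x_0,x_1,\dots)=x_i$; (N2) $q(x,e_0,e_1,\dots)=x$; (N3) $q(q(x,y_0,y_1,\dots),\boldsymbol z)=q(x,q(y_0,\boldsymbol z),q(y_1,\boldsymbol z),\dots)$. $\mathcal C^\downarrow$ is the $\tau$-algebra on $C$ in which $f$ is interpreted as $s\mapsto q^{\mathcal C}(f^{\mathcal C},s_0,s_1,\dots)$. For a $\tau$-algebra $\mathbf A$ (operations $A^\omega\to A$), $\mathbf A^\uparrow$ is the subalgebra of $\mathcal O^{(\omega)}_{\mathbf A}$ generated by its constants, where $\mathcal O^{(\omega)}_{\mathbf A}$ is the infinitary clone $\tau$-algebra of all functions $A^\omega\to A$ with $e_i(s)=s_i$, $q(g_0,g_1,\dots)(s)=g_0(g_1(s),g_2(s),\dots)$, $f\mapsto f^{\mathbf A}$ (equivalently, $\mathbf A^\uparrow$ is the set of term operations of $\mathbf A$). *)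

Set Implicit Arguments.

(* An infinitary clone tau-algebra: carrier with constants e_i (i in omega),
   a constant for each f in tau, and an omega-ary operation
   q(x, y_0, y_1, ...) written  q x y  with y : nat -> carrier. *)
Record cloneAlg (tau : Type) := CloneAlg {
  carrier :> Type;
  ce : nat -> carrier;
  cf : tau -> carrier;
  cq : carrier -> (nat -> carrier) -> carrier;
  N1 : forall (i : nat) (x : nat -> carrier), cq (ce i) x = x i;
  N2 : forall x : carrier, cq x ce = x;
  N3 : forall (x : carrier) (y z : nat -> carrier),
         cq (cq x y) z = cq x (fun i => cq (y i) z)
}.

Definition no_proper_subalgebra (tau : Type) (C : cloneAlg tau) : Prop :=
  forall P : C -> Prop,
    (forall i, P (ce C i)) ->
    (forall f, P (cf C f)) ->
    (forall x y, P x -> (forall i, P (y i)) -> P (cq C x y)) ->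
    forall x, P x.

Definition tauAlg (tau A : Type) := tau -> (nat -> A) -> A.

Definition down (tau : Type) (C : cloneAlg tau) : tauAlg tau C :=
  fun f s => cq C (cf C f) s.

Definition Oe (A : Type) (i : nat) : (nat -> A) -> A := fun s => s i.
Definition Oq (A : Type) (g0 : (nat -> A) -> A) (g : nat -> (nat -> A) -> A)
  : (nat -> A) -> A := fun s => g0 (fun i => g i s).

(* A-up: the subalgebra of O_A^(omega) generated by its constants, i.e. the
   least subset containing the e_i and the f^A and closed under q. *)
Inductive up (tau A : Type) (ops : tauAlg tau A) : ((nat -> A) -> A) -> Prop :=
| up_e : forall i, up ops (@Oe A i)
| up_f : forall f, up ops (ops f)
| up_q : forall g0 g, up ops g0 -> (forall i, up ops (g i)) -> up ops (Oq g0 g).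

Definition iso_onto_up (tau A : Type) (C : cloneAlg tau) (ops : tauAlg tau A)
  (phi : C -> ((nat -> A) -> A)) : Prop :=
  (forall x, up ops (phi x)) /\
  (forall x y, phi x = phi y -> x = y) /\
  (forall g, up ops g -> exists x, phi x = g) /\
  (forall i, phi (ce C i) = @Oe A i) /\
  (forall f, phi (cf C f) = ops f) /\
  (forall x y, phi (cq C x y) = Oq (phi x) (fun i => phi (y i))).

From Stdlib Require Import FunctionalExtensionality IndefiniteDescription.

(* Cayley representation: x acts on C^omega by s |-> q(x, s).  By (N1) and
   (N3) this is a homomorphism of clone algebras into O_C^(omega) sending f to
   f^(C-down), and by (N2) x is recovered as its value at (e_0, e_1, ...).
   The image is a subalgebra containing the constants, so it contains
   (C-down)-up; conversely the preimage of (C-down)-up is a subalgebra of C,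
   hence all of C when C has no proper subalgebra. *)

Section CayleyRepresentation.

Variables (tau : Type) (C : cloneAlg tau).

Definition cayley (x : C) : (nat -> C) -> C := fun s => cq C x s.

Lemma cayley_e (i : nat) : cayley (ce C i) = @Oe C i.
Proof. apply functional_extensionality; intro s; apply N1. Qed.

Lemma cayley_f (f : tau) : cayley (cf C f) = down C f.
Proof. reflexivity. Qed.

Lemma cayley_q (x : C) (y : nat -> C) :
  cayley (cq C x y) = Oq (cayley x) (fun i => cayley (y i)).
Proof. apply functional_extensionality; intro s; apply N3. Qed.

Lemma cayley_inj (x y : C) : cayley x = cayley y -> x = y.
Proof.
  intro E.
  rewrite <- (N2 C x), <- (N2 C y).
  change (cayley x (ce C) = cayley y (ce C)).
  now rewrite E.
Qed.

Lemma up_sub_cayley_image (g : (nat -> C) -> C) :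
  up (down C) g -> exists x, cayley x = g.
Proof.
  induction 1 as [i | f | g0 g _ [x0 Hx0] _ IHg].
  - exists (ce C i); apply cayley_e.
  - exists (cf C f); apply cayley_f.
  - destruct (functional_choice _ IHg) as [y Hy].
    exists (cq C x0 y).
    rewrite cayley_q, Hx0.
    f_equal; apply functional_extensionality; exact Hy.
Qed.

Lemma cayley_in_up :
  no_proper_subalgebra C -> forall x, up (down C) (cayley x).
Proof.
  intro Hgen; apply Hgen.
  - intro i; rewrite cayley_e; constructor.
  - intro f; rewrite cayley_f; constructor.
  - intros x y Hx Hy; rewrite cayley_q; now constructor.
Qed.

End CayleyRepresentation.

Theorem proposition4p7 (tau : Type) (C : cloneAlg tau) :
  no_proper_subalgebra C ->
  exists phi : C -> ((nat -> C) -> C), iso_onto_up C (down C) phi.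
Proof.
  intro Hgen.
  exists (@cayley _ C).
  split; [| split; [| split; [| split; [| split]]]].
  - exact (@cayley_in_up _ C Hgen).
  - exact (@cayley_inj _ C).
  - exact (@up_sub_cayley_image _ C).
  - exact (@cayley_e _ C).
  - exact (@cayley_f _ C).
  - exact (@cayley_q _ C).
Qed.
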